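(* For the full shift $(\Sigma,\sigma)$, there is a dense Mycielski subset $S\subset\Sigma$ with $\sigma(S)\subset S$ which is Banach scrambled for $\sigma$.
   Context: $\Sigma=\{0,1\}^{\mathbb{Z}_+}$ with the product topology (and a compatible metric $d$) and shift map $\sigma(x)_n=x_{n+1}$. A set $F\subset\mathbb{Z}_+$ has Banach density one if for every $\lambda<1$ there is $N\ge1$ with $\#(F\cap I)\ge\lambda\,\#(I)$ for every interval of integers $I\subset\mathbb{Z}_+$ with $\#(I)\ge N$. A pair $(x,y)$ is Banach proximal if for every $\varepsilon>0$ the set $\{n: d(\sigma^nx,\sigma^ny)<\varepsilon\}$ has Banach density one; it is asymptotic if $d(\sigma^nx,\sigma^ny)\to0$. A subset with at least two points is Banach scrambled if every pair of distinct points in it is Banach proximal but not asymptotic. A Mycielski set is a countable union of Cantor sets. *)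

From Stdlib Require Import Reals Lra Lia Classical ClassicalEpsilon.
Open Scope R_scope.

Definition Sigma := nat -> bool.

Definition shift (x : Sigma) : Sigma := fun k => x (S k).

Definition shift_iter (n : nat) (x : Sigma) : Sigma := Nat.iter n shift x.

Definition agree_upto (k : nat) (x y : Sigma) : Prop :=
  forall i, (i < k)%nat -> x i = y i.

Definition is_metric (d : Sigma -> Sigma -> R) : Prop :=
  (forall x y, 0 <= d x y) /\
  (forall x y, d x y = 0 <-> x = y) /\
  (forall x y, d x y = d y x) /\
  (forall x y z, d x z <= d x y + d y z).

(** d induces the product topology: at every point, metric balls and
    cylinder sets form equivalent neighbourhood bases. *)
Definition compatible_metric (d : Sigma -> Sigma -> R) : Prop :=
  is_metric d /\
  (forall x eps, 0 < eps -> exists k, forall y, agree_upto k x y -> d x y < eps) /\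
  (forall x k, exists eps, 0 < eps /\ forall y, d x y < eps -> agree_upto k x y).

Fixpoint count_in (F : nat -> Prop) (a L : nat) : nat :=
  match L with
  | O => O
  | S L' => ((if excluded_middle_informative (F (a + L')%nat) then 1 else 0)
             + count_in F a L')%nat
  end.

Definition banach_density_one (F : nat -> Prop) : Prop :=
  forall lam : R, lam < 1 ->
    exists N : nat, (1 <= N)%nat /\
      forall a L : nat, (N <= L)%nat -> INR (count_in F a L) >= lam * INR L.

Definition banach_proximal (d : Sigma -> Sigma -> R) (x y : Sigma) : Prop :=
  forall eps, 0 < eps ->
    banach_density_one (fun n => d (shift_iter n x) (shift_iter n y) < eps).

Definition asymptotic (d : Sigma -> Sigma -> R) (x y : Sigma) : Prop :=
  forall eps, 0 < eps -> exists N : nat,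
    forall n, (N <= n)%nat -> d (shift_iter n x) (shift_iter n y) < eps.

Definition banach_scrambled (d : Sigma -> Sigma -> R) (S : Sigma -> Prop) : Prop :=
  (exists x y, S x /\ S y /\ x <> y) /\
  (forall x y, S x -> S y -> x <> y ->
     banach_proximal d x y /\ ~ asymptotic d x y).

Definition continuous_wrt (d : Sigma -> Sigma -> R) (f : Sigma -> Sigma) : Prop :=
  forall x eps, 0 < eps -> exists delta, 0 < delta /\
    forall y, d x y < delta -> d (f x) (f y) < eps.

(** A Cantor set: a subset homeomorphic to the Cantor space {0,1}^N, i.e.
    the image of a continuous injection of the compact space Sigma. *)
Definition cantor_set (d : Sigma -> Sigma -> R) (C : Sigma -> Prop) : Prop :=
  exists f : Sigma -> Sigma, continuous_wrt d f /\
    (forall u v, f u = f v -> u = v) /\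
    (forall y, C y <-> exists u, y = f u).

Definition mycielski (d : Sigma -> Sigma -> R) (S : Sigma -> Prop) : Prop :=
  exists C : nat -> (Sigma -> Prop),
    (forall n, cantor_set d (C n)) /\
    (forall y, S y <-> exists n, C n y).

Definition dense (d : Sigma -> Sigma -> R) (S : Sigma -> Prop) : Prop :=
  forall x eps, 0 < eps -> exists y, S y /\ d x y < eps.

(** Let [S] consist of the forward orbits of the points [seed k u]. Such a point copies
    [u] below [k] and beyond [k] is supported on the powers of two, where it writes, over
    and over, every letter of a code of [(k, u)]. The free prefix makes [S] dense, and each
    map [u |-> shift^m (seed k u)] is a continuous injection, so [S] is a countable union of
    Cantor sets. Every point of [S] has support of Banach density zero, so along a set of
    density one both orbits of a pair stay close to the zero sequence: the pair is Banach
    proximal. Two distinct points of [S] differ either in the shift [m] or in some letter of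
    their codes; either way, at infinitely many powers of two one orbit shows an isolated [1]
    while the other shows a long block of zeros, so the pair is not asymptotic. *)

From Stdlib Require Import Reals Lra Lia Arith Cantor Classical ClassicalEpsilon FunctionalExtensionality.
Local Open Scope nat_scope.

Lemma shift_iter_app (n : nat) (x : Sigma) (i : nat) : shift_iter n x i = x (n + i).
Proof.
  revert x i; induction n as [|n IH]; intros x i; [reflexivity|].
  change (shift (shift_iter n x) i = x (S n + i)).
  unfold shift; rewrite IH; f_equal; lia.
Qed.

Lemma shift_iter_add (n m : nat) (x : Sigma) :
  shift_iter n (shift_iter m x) = shift_iter (n + m) x.
Proof. unfold shift_iter; now rewrite Nat.iter_add. Qed.

Lemma count_in_compl (F : nat -> Prop) (a L : nat) :
  count_in F a L + count_in (fun n => ~ F n) a L = L.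
Proof.
  induction L; simpl; auto.
  destruct (excluded_middle_informative (F (a + L)));
  destruct (excluded_middle_informative (~ F (a + L))); try tauto; lia.
Qed.

Lemma count_in_mono (F F' : nat -> Prop) (a L : nat) :
  (forall n, F n -> F' n) -> count_in F a L <= count_in F' a L.
Proof.
  intros H; induction L; simpl; auto.
  destruct (excluded_middle_informative (F (a + L)));
  destruct (excluded_middle_informative (F' (a + L))); try lia.
  exfalso; auto.
Qed.

Lemma count_in_or (F F' : nat -> Prop) (a L : nat) :
  (count_in (fun n => F n \/ F' n) a L <= count_in F a L + count_in F' a L).
Proof.
  induction L; simpl; auto.
  destruct (excluded_middle_informative (F (a + L) \/ F' (a + L)));
  destruct (excluded_middle_informative (F (a + L)));
  destruct (excluded_middle_informative (F' (a + L))); try lia; tauto.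
Qed.

Lemma count_in_translate (F : nat -> Prop) (c a L : nat) :
  count_in (fun n => F (n + c)) a L = count_in F (a + c) L.
Proof.
  induction L; simpl; auto.
  replace (a + L + c) with (a + c + L) by lia. now rewrite IHL.
Qed.

Lemma count_in_lt (B a L : nat) : count_in (fun n => n < B) a L = Nat.min L (B - a).
Proof.
  induction L; [reflexivity|]; cbn [count_in].
  rewrite IHL; destruct (excluded_middle_informative (a + L < B)); lia.
Qed.

Lemma count_in_app (F : nat -> Prop) (a L1 L2 : nat) :
  count_in F a (L1 + L2) = count_in F (a + L1) L2 + count_in F a L1.
Proof.
  induction L2; simpl.
  - now rewrite Nat.add_0_r.
  - rewrite Nat.add_succ_r; cbn [count_in]; rewrite IHL2.
    replace (a + (L1 + L2)) with (a + L1 + L2) by lia; lia.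
Qed.

Lemma count_in_none (F : nat -> Prop) (a L : nat) :
  (forall j, j < L -> ~ F (a + j)) -> count_in F a L = 0.
Proof.
  intros H; induction L; simpl; auto.
  destruct excluded_middle_informative as [HF|_]; [exfalso; eapply H; [|exact HF]; lia|].
  apply IHL; intros; apply H; lia.
Qed.

(* Every point of [F] in the window but the last is followed by [g - 1] points outside [F]. *)
Lemma count_in_gaps (F : nat -> Prop) (g : nat) : 1 <= g ->
  (forall n n', F n -> F n' -> n < n' -> n + g <= n') ->
  forall L a, count_in F a L * g <= L + g.
Proof.
  intros Hg Hgap L; induction L as [L IH] using lt_wf_ind; intro a.
  destruct L as [|L]; simpl; [lia|].
  destruct (excluded_middle_informative (F (a + L))) as [HF|HF].
  - destruct (Nat.lt_ge_cases L g).
    + rewrite count_in_none; [lia|].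
      intros j Hj HF'; specialize (Hgap _ _ HF' HF); lia.
    + replace (count_in F a L) with (count_in F a ((L - (g - 1)) + (g - 1))) by (f_equal; lia).
      rewrite count_in_app, count_in_none.
      * specialize (IH (L - (g - 1)) ltac:(lia) a); nia.
      * intros j Hj HF'; specialize (Hgap _ _ HF' HF); lia.
  - specialize (IH L ltac:(lia) a); lia.
Qed.

(** Upper Banach density zero, with the proportion [1/G] in place of a real epsilon. *)
Definition banach_density_zero (F : nat -> Prop) : Prop :=
  forall G, 0 < G -> exists N, forall a L, N <= L -> count_in F a L * G <= L.

Lemma banach_density_zero_mono (F F' : nat -> Prop) :
  (forall n, F n -> F' n) -> banach_density_zero F' -> banach_density_zero F.
Proof.
  intros HF HF' G HG; destruct (HF' G HG) as [N HN]; exists N; intros a L HL.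
  pose proof (count_in_mono F F' a L HF); specialize (HN a L HL); nia.
Qed.

Lemma banach_density_zero_or (F F' : nat -> Prop) :
  banach_density_zero F -> banach_density_zero F' ->
  banach_density_zero (fun n => F n \/ F' n).
Proof.
  intros HF HF' G HG.
  destruct (HF (2 * G) ltac:(lia)) as [N HN]; destruct (HF' (2 * G) ltac:(lia)) as [N' HN'].
  exists (N + N'); intros a L HL.
  pose proof (count_in_or F F' a L).
  specialize (HN a L ltac:(lia)); specialize (HN' a L ltac:(lia)); nia.
Qed.

Lemma banach_density_zero_exists_lt (F : nat -> nat -> Prop) (K : nat) :
  (forall i, banach_density_zero (F i)) ->
  banach_density_zero (fun n => exists i, i < K /\ F i n).
Proof.
  intros HF; induction K as [|K IH].
  - intros G _; exists 0; intros a L _.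
    rewrite count_in_none; [lia|]; intros j _ [i [Hi _]]; lia.
  - apply (banach_density_zero_mono _ (fun n => (exists i, i < K /\ F i n) \/ F K n)).
    + intros n [i [Hi HFi]].
      destruct (Nat.eq_dec i K) as [->|]; [now right|left; exists i; split; [lia|assumption]].
    + now apply banach_density_zero_or.
Qed.

Lemma banach_density_zero_translate (F : nat -> Prop) (c : nat) :
  banach_density_zero F -> banach_density_zero (fun n => F (n + c)).
Proof.
  intros HF G HG; destruct (HF G HG) as [N HN]; exists N; intros a L HL.
  rewrite count_in_translate; now apply HN.
Qed.

Lemma banach_density_zero_lt (B : nat) : banach_density_zero (fun n => n < B).
Proof. intros G _; exists (B * G); intros a L HL; rewrite count_in_lt; nia. Qed.

Lemma banach_density_zero_of_gaps (F : nat -> Prop) :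
  (forall g, exists B, forall n n', B <= n -> F n -> F n' -> n < n' -> n + g <= n') ->
  banach_density_zero F.
Proof.
  intros Hgaps G HG; destruct (Hgaps (2 * G)) as [B HB].
  exists (2 * G * (B + 1)); intros a L HL.
  pose proof (count_in_mono F (fun n => n < B \/ B <= n /\ F n) a L
    ltac:(intros n Hn; destruct (Nat.lt_ge_cases n B); auto)) as Hsplit.
  pose proof (count_in_or (fun n => n < B) (fun n => B <= n /\ F n) a L) as Hor.
  rewrite count_in_lt in Hor.
  pose proof (count_in_gaps (fun n => B <= n /\ F n) (2 * G) ltac:(lia)
    ltac:(intros n n' [Hn HFn] [_ HFn'] Hlt; exact (HB n n' Hn HFn HFn' Hlt)) L a).
  nia.
Qed.

Lemma banach_density_one_of_compl (F : nat -> Prop) :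
  banach_density_zero (fun n => ~ F n) -> banach_density_one F.
Proof.
  intros Hzero lam Hlam.
  destruct (INR_unbounded (/ (1 - lam))%R) as [G HG].
  assert (HG0 : 0 < G).
  { destruct G; [|lia]. simpl in HG. pose proof (Rinv_0_lt_compat (1 - lam)%R); lra. }
  assert (HGlam : (1 <= INR G * (1 - lam))%R).
  { apply (Rmult_lt_compat_r (1 - lam)%R) in HG; [|lra].
    rewrite Rinv_l in HG; lra. }
  destruct (Hzero G HG0) as [N HN]; exists (S N); split; [lia|]; intros a L HL.
  specialize (HN a L ltac:(lia)).
  pose proof (count_in_compl F a L) as Hsum.
  apply le_INR in HN; rewrite mult_INR in HN.
  set (good := count_in F a L) in *; set (bad := count_in (fun n => ~ F n) a L) in *.
  rewrite <- Hsum, plus_INR in HN |- *.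
  assert (0 <= INR good)%R by apply pos_INR; assert (0 <= INR bad)%R by apply pos_INR.
  assert (0 < INR G)%R by (apply lt_0_INR; lia).
  apply Rle_ge, (Rmult_le_reg_r (INR G)); [assumption|].
  assert (0 <= (INR good + INR bad) * (INR G * (1 - lam) - 1))%R by (apply Rmult_le_pos; lra).
  nra.
Qed.

Definition pulse (b : bool) : Sigma := fun i => match i with O => b | S _ => false end.

(* A compatible metric is only pointwise comparable with cylinders, so separation of
   orbits is witnessed near two fixed points. *)
Definition pulse_separated (x y : Sigma) : Prop :=
  forall K N, exists n, N <= n /\
    agree_upto K (pulse true) (shift_iter n x) /\ agree_upto K (pulse false) (shift_iter n y).

Lemma agree_upto_le (K K' : nat) (x y : Sigma) :
  K <= K' -> agree_upto K' x y -> agree_upto K x y.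
Proof. intros HK H i Hi; apply H; lia. Qed.

Lemma banach_density_zero_shift (x : Sigma) (m : nat) :
  banach_density_zero (fun n => x n = true) ->
  banach_density_zero (fun n => shift_iter m x n = true).
Proof.
  intros Hx; apply (banach_density_zero_mono _ (fun n => x (n + m) = true)).
  - intros n; rewrite shift_iter_app, Nat.add_comm; auto.
  - now apply (banach_density_zero_translate (fun n => x n = true)).
Qed.

Lemma banach_density_zero_not_agree_pulse (x : Sigma) (K : nat) :
  banach_density_zero (fun n => x n = true) ->
  banach_density_zero (fun n => ~ agree_upto K (pulse false) (shift_iter n x)).
Proof.
  intros Hx.
  apply (banach_density_zero_mono _ (fun n => exists i, i < K /\ x (n + i) = true)).
  - intros n Hn; apply NNPP; intros Hnone; apply Hn; intros i Hi.
    rewrite shift_iter_app.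
    destruct (x (n + i)) eqn:E; [exfalso; eauto|now destruct i].
  - apply banach_density_zero_exists_lt; intro i.
    now apply (banach_density_zero_translate (fun n => x n = true)).
Qed.

Section CompatibleMetric.

Variable d : Sigma -> Sigma -> R.
Hypothesis Hd : compatible_metric d.

Local Open Scope R_scope.

Lemma continuous_of_finitary (f : Sigma -> Sigma) :
  (forall j, exists M, forall u v, agree_upto M u v -> agree_upto j (f u) (f v)) ->
  continuous_wrt d f.
Proof.
  destruct Hd as [_ [Hball Hcyl]]; intros Hf x eps Heps.
  destruct (Hball (f x) eps Heps) as [j Hj]; destruct (Hf j) as [M HM].
  destruct (Hcyl x M) as [delta [Hdelta Hx]].
  exists delta; split; [assumption|]; intros y Hy; now apply Hj, HM, Hx.
Qed.

Lemma banach_proximal_of_sparse (x y : Sigma) :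
  banach_density_zero (fun n => x n = true) -> banach_density_zero (fun n => y n = true) ->
  banach_proximal d x y.
Proof.
  destruct Hd as [[_ [_ [Hsym Htri]]] [Hball _]]; intros Hx Hy eps Heps.
  destruct (Hball (pulse false) (eps / 2) ltac:(lra)) as [K HK].
  apply banach_density_one_of_compl.
  apply (banach_density_zero_mono _ (fun n =>
    ~ agree_upto K (pulse false) (shift_iter n x) \/ ~ agree_upto K (pulse false) (shift_iter n y))).
  - intros n Hfar; apply NNPP; intros Hnear; apply Hfar.
    apply not_or_and in Hnear as [Hnx%NNPP Hny%NNPP].
    apply HK in Hnx, Hny.
    pose proof (Htri (shift_iter n x) (pulse false) (shift_iter n y)).
    rewrite (Hsym (shift_iter n x) (pulse false)) in H; lra.
  - apply banach_density_zero_or; now apply banach_density_zero_not_agree_pulse.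
Qed.

Lemma asymptotic_sym (x y : Sigma) : asymptotic d x y -> asymptotic d y x.
Proof.
  destruct Hd as [[_ [_ [Hsym _]]] _]; intros H eps Heps.
  destruct (H eps Heps) as [N HN]; exists N; intros n Hn; rewrite Hsym; auto.
Qed.

Lemma not_asymptotic_of_pulse_separated (x y : Sigma) :
  pulse_separated x y -> ~ asymptotic d x y.
Proof.
  destruct Hd as [[_ [_ [Hsym Htri]]] [Hball Hcyl]]; intros Hsep Has.
  destruct (Hcyl (pulse false) 1%nat) as [e [He Hfirst]].
  destruct (Hball (pulse false) (e / 2) ltac:(lra)) as [K HK].
  destruct (Has (e / 2) ltac:(lra)) as [N HN].
  destruct (Hsep (S K) N) as [n [Hn [Hxn Hyn]]].
  specialize (HN n Hn); apply (agree_upto_le K (S K)), HK in Hyn; [|lia].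
  assert (Hxfalse : d (pulse false) (shift_iter n x) < e).
  { pose proof (Htri (pulse false) (shift_iter n y) (shift_iter n x)).
    rewrite (Hsym (shift_iter n y)) in H; lra. }
  specialize (Hfirst _ Hxfalse 0%nat ltac:(lia)); specialize (Hxn 0%nat ltac:(lia)).
  simpl in Hfirst, Hxn; congruence.
Qed.

End CompatibleMetric.

Lemma mycielski_of_pairs (d : Sigma -> Sigma -> R) (C : nat -> nat -> Sigma -> Prop) :
  (forall m k, cantor_set d (C m k)) -> mycielski d (fun y => exists m k, C m k y).
Proof.
  intros HC; exists (fun n => C (fst (Cantor.of_nat n)) (snd (Cantor.of_nat n))).
  split; [intros; apply HC|]; intros y; split.
  - intros [m [k Hy]]; exists (Cantor.to_nat (m, k)); now rewrite Cantor.cancel_of_to.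
  - intros [n Hy]; eauto.
Qed.

Definition is_pow2 (p : nat) : bool := Nat.eqb p (2 ^ Nat.log2 p).

Lemma is_pow2_pow2 (t : nat) : is_pow2 (2 ^ t) = true.
Proof. unfold is_pow2; rewrite Nat.log2_pow2 by lia; apply Nat.eqb_refl. Qed.

Lemma is_pow2_between (t p : nat) : 2 ^ t < p < 2 ^ S t -> is_pow2 p = false.
Proof.
  intros [Hlo Hhi]; unfold is_pow2; destruct (Nat.eqb_spec p (2 ^ Nat.log2 p)) as [E|]; auto.
  rewrite E in Hlo, Hhi.
  apply Nat.pow_lt_mono_r_iff in Hlo, Hhi; lia.
Qed.

Lemma is_pow2_double (p p' : nat) :
  is_pow2 p = true -> is_pow2 p' = true -> p < p' -> 2 * p <= p'.
Proof.
  unfold is_pow2; intros Hp%Nat.eqb_eq Hp'%Nat.eqb_eq Hlt; rewrite Hp, Hp' in *.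
  apply Nat.pow_lt_mono_r_iff in Hlt; [|lia].
  change (2 ^ S (Nat.log2 p) <= 2 ^ Nat.log2 p'); apply Nat.pow_le_mono_r; lia.
Qed.

Lemma banach_density_zero_pow2 : banach_density_zero (fun p => is_pow2 p = true).
Proof.
  apply banach_density_zero_of_gaps; intros g; exists g; intros p p' Hg Hp Hp' Hlt.
  pose proof (is_pow2_double p p' Hp Hp' Hlt); lia.
Qed.

Lemma cantor_fst_le (t : nat) : (fst (Cantor.of_nat t) <= t).
Proof.
  pose proof (Cantor.cancel_to_of t) as Et; destruct (Cantor.of_nat t) as [i j].
  pose proof (Cantor.to_nat_non_decreasing i j); simpl; lia.
Qed.

Lemma cantor_fst_recurrent (i T : nat) : exists t, T <= t /\ fst (Cantor.of_nat t) = i.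
Proof.
  exists (Cantor.to_nat (i, T)); rewrite Cantor.cancel_of_to.
  pose proof (Cantor.to_nat_non_decreasing i T); split; [lia|reflexivity].
Qed.

(** The word [1^(k+1) 0 u], from which [k] and [u] can be read back. *)
Definition code (k : nat) (u : Sigma) : Sigma :=
  fun i => if Nat.leb i k then true else if Nat.eqb i (S k) then false else u (i - S (S k)).

Lemma code_le (k i : nat) (u : Sigma) : i <= k -> code k u i = true.
Proof. intros Hi; unfold code; now rewrite (proj2 (Nat.leb_le i k) Hi). Qed.

Lemma code_succ (k : nat) (u : Sigma) : code k u (S k) = false.
Proof. unfold code; now rewrite (proj2 (Nat.leb_gt _ _) (Nat.lt_succ_diag_r k)), Nat.eqb_refl. Qed.

Lemma code_tail (k j : nat) (u : Sigma) : code k u (j + S (S k)) = u j.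
Proof.
  unfold code; rewrite (proj2 (Nat.leb_gt _ _)), (proj2 (Nat.eqb_neq _ _)), Nat.add_sub by lia.
  reflexivity.
Qed.

Lemma code_inj (k k' : nat) (u v : Sigma) : code k u = code k' v -> k = k' /\ u = v.
Proof.
  intros E.
  assert (Hk : k = k').
  { destruct (Nat.lt_trichotomy k k') as [Hlt|[Heq|Hlt]]; auto; exfalso.
    - pose proof (f_equal (fun w => w (S k)) E) as Ek; cbv beta in Ek.
      now rewrite code_succ, code_le in Ek by lia.
    - pose proof (f_equal (fun w => w (S k')) E) as Ek; cbv beta in Ek.
      now rewrite code_succ, code_le in Ek by lia. }
  subst k'; split; [reflexivity|]; apply functional_extensionality; intros j.
  rewrite <- (code_tail k j u), <- (code_tail k j v); now rewrite E.
Qed.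

Lemma code_finitary (k i : nat) (u v : Sigma) : agree_upto i u v -> code k u i = code k v i.
Proof.
  intros Huv; unfold code.
  destruct (Nat.leb i k) eqn:Hik; [reflexivity|]; apply Nat.leb_gt in Hik.
  destruct (Nat.eqb i (S k)); [reflexivity|]; apply Huv; lia.
Qed.

(* The letter at [2^t] is number [fst (of_nat t)], and [fst \o of_nat] takes every value infinitely often. *)
Definition seed (k : nat) (u : Sigma) : Sigma :=
  fun p => if Nat.ltb p k then u p
           else if is_pow2 p then code k u (fst (Cantor.of_nat (Nat.log2 p))) else false.

Lemma seed_prefix (k : nat) (u : Sigma) : agree_upto k u (seed k u).
Proof. intros i Hi; unfold seed; now rewrite (proj2 (Nat.ltb_lt i k) Hi). Qed.

Lemma seed_pow2 (k t : nat) (u : Sigma) :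
  k <= 2 ^ t -> seed k u (2 ^ t) = code k u (fst (Cantor.of_nat t)).
Proof.
  intros Hk; unfold seed.
  rewrite (proj2 (Nat.ltb_ge _ k) Hk), is_pow2_pow2, Nat.log2_pow2; [reflexivity|lia].
Qed.

Lemma seed_not_pow2 (k p : nat) (u : Sigma) :
  k <= p -> is_pow2 p = false -> seed k u p = false.
Proof. intros Hk Hp; unfold seed; now rewrite (proj2 (Nat.ltb_ge p k) Hk), Hp. Qed.

Lemma seed_finitary (k p : nat) (u v : Sigma) :
  agree_upto (S p) u v -> seed k u p = seed k v p.
Proof.
  intros Huv; unfold seed.
  destruct (Nat.ltb p k); [apply Huv; lia|].
  destruct (is_pow2 p); [|reflexivity].
  apply code_finitary; intros i Hi; apply Huv.
  pose proof (cantor_fst_le (Nat.log2 p)); pose proof (Nat.log2_le_lin p); lia.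
Qed.

Lemma seed_sparse (k : nat) (u : Sigma) : banach_density_zero (fun p => seed k u p = true).
Proof.
  apply (banach_density_zero_mono _ (fun p => p < k \/ is_pow2 p = true)).
  - intros p Hp; destruct (Nat.lt_ge_cases p k) as [|Hk]; [now left|right].
    destruct (is_pow2 p) eqn:E; [reflexivity|]; now rewrite seed_not_pow2 in Hp.
  - apply banach_density_zero_or; [apply banach_density_zero_lt|apply banach_density_zero_pow2].
Qed.

Lemma shift_seed_inj (m k : nat) (u v : Sigma) :
  shift_iter m (seed k u) = shift_iter m (seed k v) -> u = v.
Proof.
  intros E; enough (code k u = code k v) by now apply (code_inj k k).
  apply functional_extensionality; intros i.
  destruct (cantor_fst_recurrent i (m + k)) as [t [Ht Hi]].
  pose proof (Nat.pow_gt_lin_r 2 t ltac:(lia)).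
  pose proof (f_equal (fun w => w (2 ^ t - m)) E) as Et; cbv beta in Et.
  rewrite !shift_iter_app, Nat.add_sub_assoc, Nat.add_comm, Nat.add_sub, !seed_pow2, Hi in Et
    by lia.
  exact Et.
Qed.

Lemma shift_seed_window (m k K t : nat) (u : Sigma) :
  m + k + K <= 2 ^ t ->
  agree_upto K (pulse (code k u (fst (Cantor.of_nat t)))) (shift_iter (2 ^ t - m) (shift_iter m (seed k u))).
Proof.
  intros Ht j Hj; rewrite shift_iter_add, Nat.sub_add, shift_iter_app by lia.
  destruct j as [|j]; simpl.
  - now rewrite Nat.add_0_r, seed_pow2 by lia.
  - symmetry; apply seed_not_pow2; [lia|]; apply (is_pow2_between t); simpl; lia.
Qed.

Lemma shift_seed_gap (m m' k K t : nat) (u : Sigma) :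
  m < m' -> m' + k + K <= 2 ^ t ->
  agree_upto K (pulse false) (shift_iter (2 ^ t - m) (shift_iter m' (seed k u))).
Proof.
  intros Hm Ht j Hj; rewrite shift_iter_add, shift_iter_app.
  symmetry; destruct j; apply seed_not_pow2; try lia; apply (is_pow2_between t); simpl; lia.
Qed.

Lemma shift_seeds_pulse_separated_lt (m m' k k' : nat) (u v : Sigma) :
  m < m' -> pulse_separated (shift_iter m (seed k u)) (shift_iter m' (seed k' v)).
Proof.
  intros Hm K N.
  destruct (cantor_fst_recurrent 0 (N + m' + k + k' + K)) as [t [Ht Hi]].
  pose proof (Nat.pow_gt_lin_r 2 t ltac:(lia)).
  exists (2 ^ t - m); split; [lia|split].
  - pose proof (shift_seed_window m k K t u ltac:(lia)) as Hw; now rewrite Hi in Hw.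
  - apply shift_seed_gap; lia.
Qed.

Lemma shift_seeds_pulse_separated_code (m k k' i : nat) (u v : Sigma) :
  code k u i = true -> code k' v i = false ->
  pulse_separated (shift_iter m (seed k u)) (shift_iter m (seed k' v)).
Proof.
  intros Hu Hv K N.
  destruct (cantor_fst_recurrent i (N + m + k + k' + K)) as [t [Ht Hi]].
  pose proof (Nat.pow_gt_lin_r 2 t ltac:(lia)).
  exists (2 ^ t - m); split; [lia|split].
  - pose proof (shift_seed_window m k K t u ltac:(lia)) as Hw; now rewrite Hi, Hu in Hw.
  - pose proof (shift_seed_window m k' K t v ltac:(lia)) as Hw; now rewrite Hi, Hv in Hw.
Qed.

Lemma shift_seeds_pulse_separated (m m' k k' : nat) (u v : Sigma) :
  shift_iter m (seed k u) <> shift_iter m' (seed k' v) ->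
  pulse_separated (shift_iter m (seed k u)) (shift_iter m' (seed k' v)) \/
  pulse_separated (shift_iter m' (seed k' v)) (shift_iter m (seed k u)).
Proof.
  intros Hne.
  destruct (Nat.lt_trichotomy m m') as [Hm|[<-|Hm]];
    [left; now apply shift_seeds_pulse_separated_lt| |right; now apply shift_seeds_pulse_separated_lt].
  assert (Hcode : exists i, code k u i <> code k' v i).
  { apply NNPP; intros Hall; apply Hne.
    assert (Ecode : code k u = code k' v).
    { apply functional_extensionality; intros i; apply NNPP; eauto. }
    now destruct (code_inj _ _ _ _ Ecode) as [<- <-]. }
  destruct Hcode as [i Hi].
  destruct (code k u i) eqn:Eu, (code k' v i) eqn:Ev; try congruence;
    [left|right]; eapply shift_seeds_pulse_separated_code; eassumption.
Qed.

Lemma shift_seed_finitary (m k j : nat) (u v : Sigma) :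
  agree_upto (j + m) u v -> agree_upto j (shift_iter m (seed k u)) (shift_iter m (seed k v)).
Proof.
  intros Huv i Hi; rewrite !shift_iter_app; apply seed_finitary.
  intros q Hq; apply Huv; lia.
Qed.

Lemma cantor_set_shift_seeds (d : Sigma -> Sigma -> R) (m k : nat) :
  compatible_metric d -> cantor_set d (fun y => exists u, y = shift_iter m (seed k u)).
Proof.
  intros Hd; exists (fun u => shift_iter m (seed k u)); split; [|split].
  - apply continuous_of_finitary; [assumption|]; intros j.
    exists (j + m); apply shift_seed_finitary.
  - apply shift_seed_inj.
  - reflexivity.
Qed.

Theorem mainTheorem6 :
  forall d : Sigma -> Sigma -> R, compatible_metric d ->
  exists S : Sigma -> Prop,
    dense d S /\ mycielski d S /\
    (forall x, S x -> S (shift x)) /\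
    banach_scrambled d S.
Proof.
  intros d Hd.
  exists (fun x => exists m k u, x = shift_iter m (seed k u)).
  split; [|split; [|split; [|split]]].
  - intros x eps Heps; destruct Hd as [_ [Hball _]]; destruct (Hball x eps Heps) as [k Hk].
    exists (seed k x); split; [now exists 0, k, x|]; apply Hk, seed_prefix.
  - apply (mycielski_of_pairs d (fun m k y => exists u, y = shift_iter m (seed k u))).
    intros m k; now apply cantor_set_shift_seeds.
  - intros x [m [k [u ->]]]; now exists (S m), k, u.
  - exists (seed 1 (fun _ => true)), (seed 1 (fun _ => false)).
    split; [now exists 0, 1, (fun _ => true)|split; [now exists 0, 1, (fun _ => false)|]].
    intros E; pose proof (f_equal (fun w => w 0) E) as E0; discriminate.
  - intros x y [m [k [u ->]]] [m' [k' [v ->]]] Hne; split.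
    + apply banach_proximal_of_sparse; [assumption| |];
        apply banach_density_zero_shift, seed_sparse.
    + destruct (shift_seeds_pulse_separated m m' k k' u v Hne) as [Hsep|Hsep].
      * now apply not_asymptotic_of_pulse_separated.
      * intros Has; apply asymptotic_sym in Has; [|assumption].
        revert Has; now apply not_asymptotic_of_pulse_separated.
Qed.
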